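(* Let $n\ge q\ge1$, $L\ge1$, and let $B_1,\dots,B_r\subseteq[n]$ be fixed sets with $|B_j|\le L$. For sets $K_1,\dots,K_k\in\binom{[n]}{q}$, let $G$ be the intersection graph on the $k+r$ labeled objects $K_1,\dots,K_k,B_1,\dots,B_r$, with an edge between two objects iff their sets intersect. Then: (1) If $x\in[n]$ is fixed, the number of ordered $k$-tuples $(K_1,\dots,K_k)\in\binom{[n]}{q}^k$ such that $x\in\big(\bigcup_i K_i\big)\cup\big(\bigcup_j B_j\big)$ and $G$ is connected is at most $\binom{n-1}{q-1}^{k}(kq+rL)^{k+r-1}$. (2) If $k\ge1$ and $K_1\in\binom{[n]}{q}$ is fixed, the number of ordered $(k-1)$-tuples $(K_2,\dots,K_k)$ such that $G$ is connected is at most $q\binom{n-1}{q-1}^{k-1}(kq+rL)^{k+r-2}$. (3) If $k\ge2$, $e\in\{2,\dots,k\}$ is fixed and $K_1\in\binom{[n]}{q}$ is fixed, the number of ordered $(k-2)$-tuples $(K_2,\dots,K_{e-1},K_{e+1},\dots,K_k)$ such that, with $K_e=K_1$, $G$ is connected is at most $q\binom{n-1}{q-1}^{k-2}(kq+rL)^{k+r-3}$. (4) If $k\ge1$, $r\ge1$, $f\in[r]$ is fixed and $K_1=B_f\in\binom{[n]}{q}$, the number of ordered $(k-1)$-tuples $(K_2,\dots,K_k)$ such that $G$ is connected is at most $q\binom{n-1}{q-1}^{k-1}(kq+rL)^{k+r-3}$. In cases (3) and (4), when $k+r=2$ the count is $1$. *)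

From HB Require Import structures.
From mathcomp Require Import all_boot all_order all_algebra.
Set Implicit Arguments. Unset Strict Implicit. Unset Printing Implicit Defensive.
Import Order.TTheory GRing.Theory Num.Theory.

Definition obj (n k r : nat) (K : 'I_k -> {set 'I_n}) (B : 'I_r -> {set 'I_n})
  (o : 'I_k + 'I_r) : {set 'I_n} :=
  match o with inl i => K i | inr j => B j end.

Definition iedge (n k r : nat) (K : 'I_k -> {set 'I_n}) (B : 'I_r -> {set 'I_n})
  : rel ('I_k + 'I_r) :=
  fun a b => ~~ [disjoint obj K B a & obj K B b].

Definition iconnected (n k r : nat) (K : 'I_k -> {set 'I_n}) (B : 'I_r -> {set 'I_n})
  : bool :=
  [forall u, forall v, connect (iedge K B) u v].

From HB Require Import structures.
From mathcomp Require Import all_boot all_order all_algebra.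
From mathcomp Require Import zify ring.

(* Explore the intersection graph breadth-first, starting from a nonempty set Z
   of objects that are all pinned to one set S.  Each object of a new layer
   meets the union U of the previous layer; if it is one of the K_i it is a
   q-set meeting U, so there are at most |U| C(n-1, q-1) choices for it, and if
   it is a B_j there is no choice at all.  Giving the K_i weight q and the B_j
   weight L, the size of each union is bounded by the weight of its layer, and
   summing over all layer decompositions yields, by Abel's identity, at most
   C(n-1, q-1)^f |S| (|S| + w)^(m-1), where f, m and w are the number of free
   objects, the number of objects and their total weight outside Z.  Since
   |S| + w <= kq + rL, pinning Z = {the object containing x}, {K_1}, {K_1, K_e}
   or {K_1, B_f} gives the four bounds. *)

Set Implicit Arguments. Unset Strict Implicit. Unset Printing Implicit Defensive.
Import Order.TTheory GRing.Theory Num.Theory.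

Lemma not_disjointP (T : finType) (A B : {set T}) :
  reflect (exists2 x, x \in A & x \in B) (~~ [disjoint A & B]).
Proof.
rewrite -setI_eq0; apply: (iffP (set0Pn _)) => [[x]|[x xA xB]].
  by rewrite inE => /andP[]; exists x.
by exists x; rewrite inE xA xB.
Qed.

Lemma leq_card_bigcup (I T : finType) (P : pred I) (F : I -> {set T}) :
  #|\bigcup_(i | P i) F i| <= \sum_(i | P i) #|F i|.
Proof.
elim/big_rec2: _ => [|i A s _ le_As]; first by rewrite cards0.
exact: leq_trans (leq_card_setU _ _) (leq_add _ le_As).
Qed.

Lemma sum_subsets_card (T : finType) (A : {set T}) (f : nat -> nat) :
  \sum_(J : {set T} | J \subset A) f #|J| = \sum_(i < #|A|.+1) 'C(#|A|, i) * f i.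
Proof.
rewrite (partition_big (fun J : {set T} => (inord #|J| : 'I_#|A|.+1)) predT) //=.
apply: eq_bigr => i _.
transitivity (\sum_(J in [set J : {set T} | J \subset A & #|J| == i]) f i).
  apply: eq_big => [J|J /andP[JA /eqP <-]]; last by rewrite inordK // ltnS subset_leq_card.
  rewrite inE; case JA: (J \subset A) => //=.
  have JA_le : #|J| < #|A|.+1 by rewrite ltnS subset_leq_card.
  apply/eqP/eqP => [<-|JE]; first by rewrite inordK.
  by apply: val_inj; rewrite /= inordK JE.
by rewrite sum_nat_const cards_draws.
Qed.

Lemma expnD_subsets (T : finType) (A : {set T}) (a b : nat) :
  (a + b) ^ #|A| = \sum_(J : {set T} | J \subset A) a ^ #|J| * b ^ (#|A| - #|J|).
Proof.
rewrite (sum_subsets_card A (fun j => a ^ j * b ^ (#|A| - j))) addnC expnDn.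
by apply: eq_bigr => i _; rewrite [b ^ _ * _]mulnC.
Qed.

Lemma connect_cut_edge (T : finType) (e : rel T) (Z : {set T}) a b :
  connect e a b -> a \in Z -> b \notin Z ->
  exists u v, [/\ u \in Z, v \notin Z & e u v].
Proof.
move=> /connectP[p + ->]; elim: p a => [|c p IHp] a /=; first by move=> _ ->.
case/andP=> eac pth aZ bZ; case: (boolP (c \in Z)) => [cZ|cZ]; last by exists a, c.
exact: IHp pth cZ bZ.
Qed.

Lemma leq_expn2r (m1 m2 e : nat) : m1 <= m2 -> m1 ^ e <= m2 ^ e.
Proof. by move=> le_m; case: e => // e; rewrite leq_exp2r. Qed.

Section AbelIdentity.

Variables (T : finType) (w : T -> nat).

Definition weight (X : {set T}) : nat := \sum_(t in X) w t.

Definition tree_bound (X : {set T}) (a : nat) : nat :=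
  if X == set0 then 1 else a * (a + weight X) ^ #|X|.-1.

Lemma weight_setD (X I : {set T}) :
  I \subset X -> weight X = weight I + weight (X :\: I).
Proof.
move=> IX; rewrite /weight (big_setID I) /=; congr (_ + _).
by apply: eq_bigl => t; rewrite (setIidPr IX).
Qed.

Lemma leq_tree_bound (X : {set T}) (a b : nat) :
  a <= b -> tree_bound X a <= tree_bound X b.
Proof.
move=> le_ab; rewrite /tree_bound; case: ifP => // _.
by rewrite leq_mul // leq_expn2r // leq_add2r.
Qed.

Lemma sum_subsets_mem (X : {set T}) (t : T) (c : nat) : t \in X ->
  \sum_(I : {set T} | (I \subset X) && (t \in I)) c ^ #|I| * weight X ^ (#|X| - #|I|)
  = c * (c + weight X) ^ #|X|.-1.
Proof.
move=> tX; rewrite (reindex_onto (fun J => t |: J) (fun I => I :\ t)); last first.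
  by move=> I /andP[_ tI]; rewrite setD1K.
have -> : #|X| = (#|X :\ t|).+1 by rewrite (cardsD1 t X) tX.
rewrite /= expnD_subsets big_distrr /=.
apply: eq_big => J.
  rewrite subUset sub1set tX setU11 /= subsetD1.
  case: (boolP (t \in J)) => tJ; last by rewrite setU1K // eqxx !andbT.
  rewrite andbT andbF; apply/negbTE/negP => /andP[_ /eqP JE].
  by move: (setD11 t (t |: J)); rewrite JE tJ.
move=> /andP[_ /eqP JE]; have tJ : t \notin J by rewrite -JE setD11.
by rewrite cardsU1 tJ add1n subSS expnS mulnA.
Qed.

Lemma weight_mul_tree_bound_setD (X I : {set T}) : I \subset X ->
  weight X * tree_bound (X :\: I) (weight I) = weight I * weight X ^ (#|X| - #|I|).
Proof.
move=> IX; rewrite /tree_bound; have [XI0|XI_neq0] := eqVneq (X :\: I) set0.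
  have -> : I = X by apply/eqP; rewrite eqEsubset IX -setD_eq0 XI0 eqxx.
  by rewrite subnn expn0.
have <- : #|X :\: I| = #|X| - #|I| by rewrite cardsD (setIidPr IX).
have XI_gt0 : 0 < #|X :\: I| by rewrite card_gt0.
by rewrite -(weight_setD IX) -[in RHS](prednK XI_gt0) expnS mulnCA.
Qed.

Hypothesis w_gt0 : forall t, 0 < w t.

Lemma weight_gt0 (X : {set T}) : X != set0 -> 0 < weight X.
Proof.
case/set0Pn => t tX; rewrite /weight (big_setD1 t tX) /=.
exact: leq_trans (w_gt0 t) (leq_addr _ _).
Qed.

(* Abel's identity, in the form of the recursion of layer-by-layer counting:
   a first layer I attached to a set of size c, then X :\: I hanging from a
   set of size at most [weight I]. *)
Lemma tree_bound_rec (X : {set T}) (c : nat) : X != set0 ->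
  \sum_(I : {set T} | (I \subset X) && (I != set0))
     c ^ #|I| * tree_bound (X :\: I) (weight I)
  = tree_bound X c.
Proof.
move=> nX; rewrite {2}/tree_bound (negbTE nX).
apply/eqP; rewrite -(eqn_pmul2l (weight_gt0 nX)); apply/eqP.
rewrite big_distrr /=; set WX := weight X.
under eq_bigr => I /andP[IX _] do rewrite mulnCA weight_mul_tree_bound_setD // mulnA.
under eq_bigr => I _ do rewrite mulnAC mulnC /weight big_distrl /=.
rewrite (exchange_big_dep (mem X)) /=; last by move=> I t /andP[IX _] tI; exact: (subsetP IX).
rewrite /WX /weight big_distrl /=; apply: eq_bigr => t tX.
rewrite -big_distrr /= -/(weight X) -(sum_subsets_mem _ tX); congr (_ * _).
apply: eq_bigl => I; rewrite andbAC; case: (boolP (t \in I)) => tI; rewrite ?andbF //=.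
have -> : I != set0 by apply/set0Pn; exists t.
by rewrite andbT.
Qed.

End AbelIdentity.

Section ConnectedCount.

Variables (n q L r k : nat) (B : 'I_r -> {set 'I_n}).
Hypotheses (q_gt0 : 0 < q) (L_gt0 : 0 < L) (B_le : forall j, #|B j| <= L).

Local Notation vertex := ('I_k + 'I_r)%type.
Local Notation fam := {ffun 'I_k -> {set 'I_n}}.
Local Notation C := 'C(n.-1, q.-1).

Definition wt (o : vertex) : nat := if o is inl _ then q else L.
Local Notation weight := (weight wt).
Local Notation tree_bound := (tree_bound wt).

Definition total_weight : nat := k * q + r * L.
Local Notation W := total_weight.

Definition nvar (X : {set vertex}) : nat := #|[set i | inl i \in X]|.

Definition cover (K : fam) (X : {set vertex}) : {set 'I_n} :=
  \bigcup_(o in X) obj K B o.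

(* No proper part Y of X is cut off from the rest of X, even together with U:
   every vertex of X is joined to U by a path inside X. *)
Definition linked (K : fam) (X : {set vertex}) (U : {set 'I_n}) : bool :=
  [forall Y : {set vertex}, (Y \proper X) ==>
     [exists o in X :\: Y, ~~ [disjoint obj K B o & U :|: cover K Y]]].

Definition layer (K : fam) (X : {set vertex}) (U : {set 'I_n}) : {set vertex} :=
  [set o in X | ~~ [disjoint obj K B o & U]].

Definition extensions (K0 : fam) (X : {set vertex}) (U : {set 'I_n}) : {set fam} :=
  [set K : fam | [forall i, if inl i \in X then #|K i| == q else K i == K0 i]
                 && linked K X U].

Definition meeting (K0 : fam) (I : {set vertex}) (U : {set 'I_n}) : {set fam} :=
  [set K : fam | [forall i, if inl i \in I then (#|K i| == q) && ~~ [disjoint K i & U]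
                            else K i == K0 i]].

Definition patch (K0 K : fam) (I : {set vertex}) : fam :=
  [ffun i => if inl i \in I then K i else K0 i].

Lemma linked_sub (K : fam) (X : {set vertex}) (U V : {set 'I_n}) :
  U \subset V -> linked K X U -> linked K X V.
Proof.
move=> UV /forallP linkedU; apply/forallP => Y; apply/implyP => YX.
have /existsP[o /andP[oXY /not_disjointP[x xo xUY]]] := implyP (linkedU Y) YX.
apply/existsP; exists o; rewrite oXY; apply/not_disjointP; exists x => //.
by move: xUY; rewrite !inE => /orP[/(subsetP UV)->|->]; rewrite ?orbT.
Qed.

Lemma linked_layer (K : fam) (X : {set vertex}) (U : {set 'I_n}) :
  linked K X U -> linked K (X :\: layer K X U) (cover K (layer K X U)).
Proof.
set I := layer K X U => /forallP linkedU; apply/forallP => Y; apply/implyP => YXI.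
have IX : I \subset X by apply/subsetP => o; rewrite inE => /andP[].
have YI_X : (Y :|: I) \proper X.
  case/properP: YXI => YXI [o]; rewrite inE => /andP[oI oX] oY; apply/properP; split.
    by rewrite subUset IX andbT; apply: subset_trans YXI (subsetDl _ _).
  by exists o; rewrite // inE negb_or oY.
have /existsP[o /andP[]] := implyP (linkedU _) YI_X.
rewrite !inE negb_or => /andP[/andP[oY oI] oX] /not_disjointP[x xo].
rewrite /cover bigcup_setU inE => /orP[xU|xYI].
  by case/negP: oI; rewrite oX; apply/not_disjointP; exists x.
apply/existsP; exists o; rewrite !inE oY oI oX; apply/not_disjointP; exists x => //.
by rewrite setUC.
Qed.

Definition qsets_through (u : 'I_n) : {set {set 'I_n}} :=
  [set S : {set 'I_n} | (#|S| == q) && (u \in S)].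

Lemma card_qsets_through (u : 'I_n) : #|qsets_through u| <= C.
Proof.
have remu_inj : {in qsets_through u &, injective (fun S => S :\ u)}.
  move=> S1 S2; rewrite !inE => /andP[_ uS1] /andP[_ uS2] eqS.
  by rewrite -(setD1K uS1) -(setD1K uS2) eqS.
rewrite -(card_in_imset remu_inj).
apply: leq_trans (_ : _ <= #|[set A : {set 'I_n} | A \subset [set~ u] & #|A| == q.-1]|) _.
  apply: subset_leq_card; apply/subsetP => _ /imsetP[S + ->].
  rewrite !inE => /andP[/eqP cardS uS]; apply/andP; split.
    by apply/subsetP => y; rewrite !inE => /andP[].
  by rewrite -cardS (cardsD1 u S) uS.
by rewrite cards_draws cardsC1 card_ord.
Qed.

Lemma card_qsets_meet (U : {set 'I_n}) :
  #|[set S : {set 'I_n} | (#|S| == q) && ~~ [disjoint S & U]]| <= #|U| * C.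
Proof.
apply: leq_trans (subset_leq_card (_ : _ \subset \bigcup_(u in U) qsets_through u)) _.
  apply/subsetP => S; rewrite inE => /andP[cardS /not_disjointP[x xS xU]].
  by apply/bigcupP; exists x; rewrite // inE cardS xS.
apply: leq_trans (leq_card_bigcup _ _) _.
by rewrite -sum_nat_const; apply: leq_sum => u _; exact: card_qsets_through.
Qed.

Lemma card_meeting (K0 : fam) (I : {set vertex}) (U : {set 'I_n}) :
  #|meeting K0 I U| <= (#|U| * C) ^ nvar I.
Proof.
pose F (i : 'I_k) : {set {set 'I_n}} := if inl i \in I
  then [set S : {set 'I_n} | (#|S| == q) && ~~ [disjoint S & U]] else [set K0 i].
have -> : #|meeting K0 I U| = #|family F|.
  apply: eq_card => K; rewrite inE; apply/forallP/familyP => KF i; have := KF i;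
    by rewrite /F; case: ifP; rewrite !inE.
rewrite card_family foldrE big_image /=.
apply: leq_trans (_ : \prod_(i : 'I_k) (if inl i \in I then #|U| * C else 1) <= _).
  by apply: leq_prod => i _; rewrite /F; case: ifP => _; rewrite ?card_qsets_meet ?cards1.
rewrite -big_mkcond /= prod_nat_const /nvar; apply: eq_leq; congr (_ ^ _).
by apply: eq_card => i; rewrite inE.
Qed.

Lemma nvar_leq_card (I : {set vertex}) : nvar I <= #|I|.
Proof.
rewrite /nvar -(card_imset _ (@inl_inj 'I_k 'I_r)); apply: subset_leq_card.
by apply/subsetP => o /imsetP[i]; rewrite inE => iI ->.
Qed.

Lemma nvar_setD (X I : {set vertex}) :
  I \subset X -> nvar X = nvar I + nvar (X :\: I).
Proof.
move=> IX; rewrite /nvar -(cardsID [set i | inl i \in I] [set i | inl i \in X]).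
congr (_ + _); apply: eq_card => i; rewrite !inE; last by rewrite andbC.
by case: (boolP (inl i \in I)) => iI; rewrite ?andbF ?andbT // (subsetP IX).
Qed.

Lemma card_cover_meeting (K0 K : fam) (I : {set vertex}) (U : {set 'I_n}) :
  K \in meeting K0 I U -> #|cover K I| <= weight I.
Proof.
rewrite inE => /forallP Kq; apply: leq_trans (leq_card_bigcup _ _) _.
apply: leq_sum => -[i|j] /= oI //.
by have := Kq i; rewrite oI => /andP[/eqP-> _].
Qed.

Lemma layer_fiber (K0 : fam) (X I : {set vertex}) (U : {set 'I_n}) : I \subset X ->
  [set K in extensions K0 X U | layer K X U == I] \subset
  \bigcup_(K1 in meeting K0 I U) extensions K1 (X :\: I) (cover K1 I).
Proof.
move=> IX; apply/subsetP => K; rewrite !inE => /andP[/andP[/forallP Kq linkedK] /eqP KI].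
apply/bigcupP; exists (patch K0 K I).
  rewrite inE; apply/forallP => i; rewrite ffunE; case iI: (inl i \in I) => //.
  have /eqP-> : #|K i| == q by have := Kq i; rewrite (subsetP IX _ iI).
  by move: iI; rewrite -KI inE eqxx => /andP[].
have -> : cover (patch K0 K I) I = cover K I.
  by apply: eq_bigr => -[i|j] //= iI; rewrite ffunE iI.
rewrite inE -KI linked_layer // andbT KI; apply/forallP => i; rewrite in_setD ffunE.
by case: (boolP (inl i \in I)) => iI //=; have := Kq i; case: (inl i \in X).
Qed.

Lemma nvar_set0 : nvar set0 = 0.
Proof. by apply: eq_card0 => i; rewrite inE in_set0. Qed.

Lemma card_extensions0 (K0 : fam) (U : {set 'I_n}) : #|extensions K0 set0 U| <= 1.
Proof.
rewrite -(cards1 K0); apply: subset_leq_card; apply/subsetP => K.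
rewrite !inE => /andP[/forallP K0K _]; apply/eqP/ffunP => i.
by apply/eqP; have := K0K i; rewrite in_set0.
Qed.

Lemma extensions_layers (K0 : fam) (X : {set vertex}) (U : {set 'I_n}) : X != set0 ->
  extensions K0 X U \subset \bigcup_(I : {set vertex} | (I \subset X) && (I != set0))
    [set K in extensions K0 X U | layer K X U == I].
Proof.
move=> nX; apply/subsetP => K extK; apply/bigcupP; exists (layer K X U); last first.
  by rewrite inE extK eqxx.
apply/andP; split; first by apply/subsetP => o; rewrite inE => /andP[].
move: extK; rewrite inE => /andP[_ /forallP /(_ set0)]; rewrite proper0 nX /=.
case/existsP=> o /andP[]; rewrite setD0 => oX; rewrite /cover big_set0 setU0 => oU.
by apply/set0Pn; exists o; rewrite inE oX.
Qed.

Lemma card_layer_fiber (K0 : fam) (X I : {set vertex}) (U : {set 'I_n}) :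
  I \subset X -> I != set0 ->
  (forall K1 V, #|extensions K1 (X :\: I) V|
                <= C ^ nvar (X :\: I) * tree_bound (X :\: I) #|V|) ->
  #|[set K in extensions K0 X U | layer K X U == I]|
  <= C ^ nvar X * (#|U| ^ #|I| * tree_bound (X :\: I) (weight I)).
Proof.
move=> IX nI IH; have [U0|U_gt0] := posnP #|U|.
  rewrite (_ : [set K in _ | _] = set0) ?cards0 //; apply/setP => K.
  rewrite !inE; apply/negbTE/negP => /andP[_ /eqP KI].
  case/set0Pn: nI => o; rewrite -KI inE => /andP[_ /not_disjointP[x _]].
  by rewrite (cards0_eq U0) inE.
apply: leq_trans (subset_leq_card (layer_fiber K0 U IX)) _.
apply: leq_trans (leq_card_bigcup _ _) _.
apply: leq_trans (_ : _ <= \sum_(K1 in meeting K0 I U)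
    C ^ nvar (X :\: I) * tree_bound (X :\: I) (weight I)) _.
  apply: leq_sum => K1 K1I; apply: leq_trans (IH _ _) _.
  by rewrite leq_mul2l leq_tree_bound ?orbT // (card_cover_meeting K1I).
have meetI : #|meeting K0 I U| <= #|U| ^ #|I| * C ^ nvar I.
  apply: leq_trans (card_meeting K0 I U) _; rewrite expnMn leq_mul2r.
  by apply/orP; right; exact: leq_pexp2l U_gt0 (nvar_leq_card I).
rewrite sum_nat_const (nvar_setD IX) expnD.
by apply: leq_trans (leq_mul meetI (leqnn _)) _; apply: eq_leq; ring.
Qed.

Theorem card_extensions (X : {set vertex}) (K0 : fam) (U : {set 'I_n}) :
  #|extensions K0 X U| <= C ^ nvar X * tree_bound X #|U|.
Proof.
elim: {X}_.+1 {-2}X (ltnSn #|X|) K0 U => // s IHs X X_le K0 U.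
have [->|nX] := eqVneq X set0.
  by rewrite nvar_set0 /tree_bound eqxx card_extensions0.
rewrite -(tree_bound_rec _ _ nX) ?big_distrr; last by case.
apply: leq_trans (subset_leq_card (extensions_layers K0 U nX)) _.
apply: leq_trans (leq_card_bigcup _ _) _.
apply: leq_sum => I /andP[IX nI]; apply: card_layer_fiber => // K1 V; apply: IHs.
rewrite -card_gt0 in nI; rewrite cardsD (setIidPr IX).
by move: X_le nI (subset_leq_card IX); lia.
Qed.

Lemma linked_connected (K : fam) (Z : {set vertex}) :
  iconnected K B -> Z != set0 -> linked K (~: Z) (cover K Z).
Proof.
move=> /forallP Kconn /set0Pn[z zZ]; apply/forallP => Y; apply/implyP.
case/properP=> _ [v]; rewrite inE => vZ vY.
have zZY : z \in Z :|: Y by rewrite inE zZ.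
have vZY : v \notin Z :|: Y by rewrite inE negb_or vY andbT.
have [u [w [uZY + /not_disjointP[x xu xw]]]] :=
  connect_cut_edge (forallP (Kconn z) v) zZY vZY.
rewrite inE negb_or => /andP[wZ wY].
apply/existsP; exists w; rewrite !inE wZ wY /=; apply/not_disjointP; exists x => //.
by rewrite inE; case/setUP: uZY => [uZ|uY]; apply/orP; [left|right]; apply/bigcupP; exists u.
Qed.

Lemma card_vertex : #|{: vertex}| = k + r.
Proof. by rewrite card_sum !card_ord. Qed.

Lemma weight_setT : weight [set: vertex] = W.
Proof.
rewrite /weight (eq_bigl predT) => [|o]; last by rewrite in_setT.
by rewrite big_sumType /= !sum_nat_const !card_ord.
Qed.

Lemma weight_setC (Z : {set vertex}) : weight (~: Z) = W - weight Z.
Proof. by rewrite -weight_setT (weight_setD _ (subsetT Z)) setTD addKn. Qed.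

Lemma weight_leq_total (Z : {set vertex}) : weight Z <= W.
Proof. by rewrite -weight_setT (weight_setD _ (subsetT Z)) leq_addr. Qed.

Lemma card_setC_vertex (Z : {set vertex}) : #|~: Z| = k + r - #|Z|.
Proof. by rewrite -card_vertex -(cardsC Z) addKn. Qed.

Lemma nvar_setC (Z : {set vertex}) : nvar (~: Z) = k - nvar Z.
Proof.
have nvarT : nvar [set: vertex] = k.
  by rewrite /nvar -[RHS](card_ord k); apply: eq_card => i; rewrite !inE.
by move: (nvar_setD (subsetT Z)); rewrite setTD nvarT; lia.
Qed.

Lemma nvar_setU (Z Z' : {set vertex}) :
  [disjoint Z & Z'] -> nvar (Z :|: Z') = nvar Z + nvar Z'.
Proof.
move=> ZZ'; rewrite (nvar_setD (subsetUl Z Z')) setDUl setDv set0U.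
by move: ZZ'; rewrite disjoint_sym => /setDidPl->.
Qed.

Lemma nvar_set1 (o : vertex) : nvar [set o] = if o is inl _ then 1 else 0.
Proof.
case: o => [i|j]; rewrite /nvar; last by apply: eq_card0 => i; rewrite !inE.
by rewrite -(cards1 i); apply: eq_card => i'; rewrite !inE.
Qed.

Lemma tree_bound_setC (Z : {set vertex}) (a : nat) :
  tree_bound (~: Z) a =
  if #|Z| == k + r then 1 else a * (a + (W - weight Z)) ^ (k + r - #|Z|).-1.
Proof.
rewrite /tree_bound -cards_eq0 card_setC_vertex weight_setC subn_eq0.
have Z_le : #|Z| <= k + r by rewrite -card_vertex max_card.
by rewrite eqn_leq Z_le.
Qed.

Lemma tree_bound_setC_lt (Z : {set vertex}) (a : nat) : #|Z| < k + r ->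
  a <= weight Z -> tree_bound (~: Z) a * W ^ #|Z|.+1 <= a * W ^ (k + r).
Proof.
move=> Z_lt aZ; rewrite tree_bound_setC ltn_eqF //.
have -> : W ^ (k + r) = W ^ (k + r - #|Z|).-1 * W ^ #|Z|.+1.
  by rewrite -expnD; congr (_ ^ _); lia.
rewrite mulnA; do 2 apply: leq_mul => //; apply: leq_expn2r.
by have := weight_leq_total Z; lia.
Qed.

Lemma tree_bound_setC_le (Z : {set vertex}) (a : nat) :
  a <= weight Z -> tree_bound (~: Z) a * W ^ #|Z|.+1 <= weight Z * W ^ (k + r).
Proof.
move=> aZ; have [Z_lt|] := ltnP #|Z| (k + r).
  by apply: leq_trans (tree_bound_setC_lt Z_lt aZ) _; rewrite leq_mul2r aZ orbT.
rewrite -card_vertex => ZT_le.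
have -> : Z = setT by apply/eqP; rewrite eqEcard subsetT cardsT.
by rewrite setCT /tree_bound eqxx weight_setT cardsT card_vertex expnS mul1n.
Qed.

Definition pinned (A : {set fam}) (Z : {set vertex}) (S : {set 'I_n}) : Prop :=
  {in A, forall K : fam, [/\ iconnected K B, forall i, #|K i| = q
                                          & {in Z, forall o, obj K B o = S}]}.

Lemma card_connected_pinned (Z : {set vertex}) (S : {set 'I_n}) (A : {set fam}) :
  Z != set0 ->
  pinned A Z S ->
  #|A| <= C ^ (k - nvar Z) * tree_bound (~: Z) #|S|.
Proof.
move=> nZ AK; rewrite -nvar_setC; apply: leq_trans (card_extensions _ [ffun=> S] S).
apply: subset_leq_card; apply/subsetP => K /AK[Kconn Kq KZ].
have ZS : cover K Z \subset S by apply/bigcupsP => o /KZ->.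
rewrite inE (linked_sub ZS (linked_connected Kconn nZ)) andbT.
apply/forallP => i; rewrite inE ffunE Kq eqxx.
by case: (boolP (inl i \in Z)) => //= /KZ /= ->.
Qed.

Lemma card_connected_pinned_lt (Z : {set vertex}) (S : {set 'I_n}) (A : {set fam}) :
  Z != set0 -> #|Z| < k + r -> #|S| <= weight Z ->
  pinned A Z S ->
  #|A| * W ^ #|Z|.+1 <= #|S| * C ^ (k - nvar Z) * W ^ (k + r).
Proof.
move=> nZ Z_lt SZ /(card_connected_pinned nZ) cardA.
apply: leq_trans (leq_mul cardA (leqnn _)) _.
by rewrite -mulnA [#|S| * _]mulnC -mulnA leq_mul2l tree_bound_setC_lt ?orbT.
Qed.

Lemma card_connected_pinned_weight (Z : {set vertex}) (S : {set 'I_n}) (A : {set fam}) :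
  Z != set0 -> #|S| <= weight Z ->
  pinned A Z S ->
  #|A| * W ^ #|Z|.+1 <= weight Z * C ^ (k - nvar Z) * W ^ (k + r).
Proof.
move=> nZ SZ /(card_connected_pinned nZ) cardA.
apply: leq_trans (leq_mul cardA (leqnn _)) _.
by rewrite -mulnA [weight Z * _]mulnC -mulnA leq_mul2l tree_bound_setC_le ?orbT.
Qed.

Lemma card_connected_pinned_all (Z : {set vertex}) (S : {set 'I_n}) (A : {set fam}) :
  Z != set0 -> #|Z| = k + r ->
  pinned A Z S ->
  #|A| <= 1.
Proof.
move=> nZ Z_eq /(card_connected_pinned nZ); rewrite tree_bound_setC Z_eq eqxx muln1.
rewrite -nvar_setC (_ : ~: Z = set0) ?nvar_set0 //.
by apply/eqP; rewrite -cards_eq0 card_setC_vertex Z_eq subnn.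
Qed.

Definition rooted_at (i0 : 'I_k) (S : {set 'I_n}) : {set fam} :=
  [set K : fam | [forall i, #|K i| == q] && (K i0 == S) && iconnected K B].

Lemma rooted_at_pinned (i0 : 'I_k) (S : {set 'I_n}) :
  pinned (rooted_at i0 S) [set inl i0] S.
Proof.
move=> K; rewrite inE => /andP[/andP[/forallP Kq /eqP KS] Kconn].
by split=> // [i|o /set1P->]; [exact/eqP|].
Qed.

Lemma card_rooted_at (i0 : 'I_k) (S : {set 'I_n}) : #|S| = q ->
  #|rooted_at i0 S| * W ^ 2 <= q * C ^ (k - 1) * W ^ (k + r).
Proof.
move=> cardS; have := card_connected_pinned_weight _ _ (@rooted_at_pinned i0 S).
rewrite cards1 nvar_set1 /weight big_set1 cardS; apply=> //.
by apply/set0Pn; exists (inl i0); rewrite inE.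
Qed.

Lemma card_qsets_connected (j : 'I_r) :
  #|[set K : fam | [forall i, #|K i| == q] && iconnected K B]| * W ^ 2
  <= L * C ^ k * W ^ (k + r).
Proof.
have := @card_connected_pinned_weight [set inr j] (B j)
          [set K : fam | [forall i, #|K i| == q] && iconnected K B].
rewrite cards1 nvar_set1 subn0 /weight big_set1; apply=> //=.
  by apply/set0Pn; exists (inr j); rewrite inE.
move=> K; rewrite inE => /andP[/forallP Kq Kconn].
by split=> // [i|o /set1P->]; [exact/eqP|].
Qed.

Lemma total_weight_gt0 : (0 < W) = (0 < k + r).
Proof. by rewrite /total_weight !addn_gt0 !muln_gt0 q_gt0 L_gt0 !andbT. Qed.

Lemma through_point_gt0 (x : 'I_n) :
  0 < #|[set K : fam | [forall i, #|K i| == q]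
          && (x \in (\bigcup_i K i) :|: (\bigcup_j B j)) && iconnected K B]| ->
  0 < W.
Proof.
rewrite total_weight_gt0 => /card_gt0P[K]; rewrite inE => /andP[/andP[_]].
by case/setUP=> /bigcupP[o _ _] _; have := ltn_ord o; lia.
Qed.

Lemma through_point_sub (x : 'I_n) :
  [set K : fam | [forall i, #|K i| == q]
      && (x \in (\bigcup_i K i) :|: (\bigcup_j B j)) && iconnected K B]
  \subset (\bigcup_(i0 : 'I_k) \bigcup_(S in qsets_through x)
             rooted_at i0 S)
          :|: \bigcup_(j : 'I_r) [set K : fam | [forall i, #|K i| == q] && iconnected K B].
Proof.
apply/subsetP => K; rewrite inE => /andP[/andP[Kq]].
case/setUP=> /bigcupP[o _ xo] Kconn; apply/setUP; [left|right]; apply/bigcupP; exists o => //.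
  by apply/bigcupP; exists (K o); rewrite !inE ?Kq ?eqxx ?Kconn ?(forallP Kq) ?xo.
by rewrite inE Kq Kconn.
Qed.

Lemma card_through_point (x : 'I_n) :
  #|[set K : fam | [forall i, #|K i| == q]
      && (x \in (\bigcup_i K i) :|: (\bigcup_j B j)) && iconnected K B]| * W
  <= C ^ k * W ^ (k + r).
Proof.
set A := [set K : fam | _].
have kC : k * (C * C ^ (k - 1)) = k * C ^ k.
  by case: (posnP k) => [->|k_gt0] //; rewrite -expnS subn1 prednK.
have AW : #|A| * W ^ 2 <= C ^ k * W ^ (k + r) * (k * q + r * L).
  apply: leq_trans (leq_mul (subset_leq_card (through_point_sub x)) (leqnn _)) _.
  apply: leq_trans (leq_mul (leq_card_setU _ _) (leqnn _)) _.
  rewrite mulnDl; apply: leq_trans (leq_add (leq_mul (leq_card_bigcup _ _) (leqnn _))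
                                            (leq_mul (leq_card_bigcup _ _) (leqnn _))) _.
  rewrite !big_distrl /=.
  apply: leq_trans (leq_add
    (_ : _ <= \sum_(i0 : 'I_k) C * (q * C ^ (k - 1) * W ^ (k + r)))
    (_ : _ <= \sum_(j : 'I_r) L * C ^ k * W ^ (k + r))) _.
  - apply: leq_sum => i0 _; apply: leq_trans (leq_mul (leq_card_bigcup _ _) (leqnn _)) _.
    rewrite big_distrl /=.
    apply: leq_trans (_ : _ <= \sum_(S in qsets_through x)
                                 q * C ^ (k - 1) * W ^ (k + r)) _.
      by apply: leq_sum => S; rewrite inE => /andP[/eqP cardS _]; exact: card_rooted_at.
    by rewrite sum_nat_const leq_mul2r card_qsets_through orbT.
  - by apply: leq_sum => j _; exact: card_qsets_connected.
  rewrite !sum_nat_const !card_ord.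
  have -> : k * (C * (q * C ^ (k - 1) * W ^ (k + r)))
            = k * (C * C ^ (k - 1)) * q * W ^ (k + r) by ring.
  by rewrite kC; apply: eq_leq; ring.
have [W0|W_gt0] := posnP W; first by rewrite W0 muln0.
by rewrite -(leq_pmul2r W_gt0) -mulnA mulnn.
Qed.

Definition rooted_twice (i0 e : 'I_k) (S : {set 'I_n}) : {set fam} :=
  [set K : fam | [forall i, #|K i| == q] && (K i0 == S) && (K e == S) && iconnected K B].

Lemma rooted_twice_pinned (i0 e : 'I_k) (S : {set 'I_n}) :
  pinned (rooted_twice i0 e S) [set inl i0; inl e] S.
Proof.
move=> K; rewrite inE => /andP[/andP[/andP[/forallP Kq /eqP Ki0] /eqP Ke] Kconn].
by split=> // [i|o /set2P[]->]; [exact/eqP| |].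
Qed.

Lemma rooted_at_block_pinned (i0 : 'I_k) (f : 'I_r) :
  pinned (rooted_at i0 (B f)) [set inl i0; inr f] (B f).
Proof.
move=> K /(@rooted_at_pinned i0 (B f))[Kconn Kq Ki0].
by split=> // o /set2P[]->; [exact/Ki0/set11|].
Qed.

Lemma const_connected (S : {set 'I_n}) :
  S != set0 -> (forall j, B j = S) -> iconnected ([ffun=> S] : fam) B.
Proof.
case/set0Pn=> x xS BS; have objS o : obj ([ffun=> S] : fam) B o = S.
  by case: o => [i|j] /=; rewrite ?ffunE ?BS.
by apply/forallP => u; apply/forallP => v; apply: connect1; rewrite /iedge !objS;
  apply/not_disjointP; exists x.
Qed.

Lemma card_rooted_twice (i0 e : 'I_k) (S : {set 'I_n}) :
  i0 != e -> #|S| = q -> 2 < k + r ->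
  #|rooted_twice i0 e S| * W ^ 3 <= q * C ^ (k - 2) * W ^ (k + r).
Proof.
move=> i0e cardS m_gt2.
have := card_connected_pinned_lt _ _ _ (@rooted_twice_pinned i0 e S).
rewrite cards2 i0e nvar_setU ?disjoints1 ?inE // !nvar_set1 cardS; apply=> //.
  by apply/set0Pn; exists (inl i0); rewrite !inE eqxx.
by rewrite /weight big_setU1 ?inE // big_set1 /= leq_addr.
Qed.

Lemma card_rooted_twice_eq1 (i0 e : 'I_k) (S : {set 'I_n}) :
  i0 != e -> #|S| = q -> k + r = 2 -> #|rooted_twice i0 e S| = 1.
Proof.
move=> i0e cardS m_eq2; apply/eqP; rewrite eqn_leq.
rewrite (card_connected_pinned_all _ _ (@rooted_twice_pinned i0 e S)) /=; first last.
- by rewrite cards2 i0e.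
- by apply/set0Pn; exists (inl i0); rewrite !inE eqxx.
have k_ge2 : 1 < k.
  by have := subset_leq_card (subsetT [set i0; e]); rewrite cards2 i0e cardsT card_ord.
apply/card_gt0P; exists [ffun=> S]; rewrite inE !ffunE !eqxx !andbT.
apply/andP; split; first by apply/forallP => i; rewrite ffunE cardS.
by apply: const_connected => [|j]; [rewrite -card_gt0 cardS | have := ltn_ord j; lia].
Qed.

Lemma card_rooted_at_block (i0 : 'I_k) (f : 'I_r) :
  #|B f| = q -> 2 < k + r ->
  #|rooted_at i0 (B f)| * W ^ 3 <= q * C ^ (k - 1) * W ^ (k + r).
Proof.
move=> cardBf m_gt2.
have := card_connected_pinned_lt _ _ _ (@rooted_at_block_pinned i0 f).
rewrite cards2 nvar_setU ?disjoints1 ?inE // !nvar_set1 cardBf; apply=> //.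
  by apply/set0Pn; exists (inl i0); rewrite !inE eqxx.
by rewrite /weight big_setU1 ?inE // big_set1 /= leq_addr.
Qed.

Lemma card_rooted_at_block_eq1 (i0 : 'I_k) (f : 'I_r) :
  #|B f| = q -> k + r = 2 -> #|rooted_at i0 (B f)| = 1.
Proof.
move=> cardBf m_eq2; apply/eqP; rewrite eqn_leq.
rewrite (card_connected_pinned_all _ _ (@rooted_at_block_pinned i0 f)) /=; first last.
- by rewrite cards2.
- by apply/set0Pn; exists (inl i0); rewrite !inE eqxx.
apply/card_gt0P; exists [ffun=> B f]; rewrite inE !ffunE !eqxx !andbT.
apply/andP; split; first by apply/forallP => i; rewrite ffunE cardBf.
apply: const_connected => [|j]; first by rewrite -card_gt0 cardBf.
by congr B; apply: ord_inj; have := ltn_ord j; have := ltn_ord f; have := ltn_ord i0; lia.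
Qed.

End ConnectedCount.

Local Open Scope ring_scope.

Lemma ler_natr_exprz (R : numFieldType) (a c w i j : nat) :
  ((0 < a)%N -> (0 < w)%N) -> (a * w ^ j <= c * w ^ i)%N ->
  a%:R <= c%:R * w%:R ^ (i%:Z - j%:Z) :> R.
Proof.
move=> w_pos le_aw; have [->|/w_pos w_gt0] := posnP a; first by rewrite mulr_ge0 ?exprz_ge0.
rewrite expfzDr ?pnatr_eq0 -?lt0n // -exprnN -exprnP mulrA ler_pdivlMr ?exprn_gt0 ?ltr0n //.
by rewrite -!natrX -!natrM ler_nat.
Qed.

Theorem mainTheorem7 (n q L r k : nat) (B : 'I_r -> {set 'I_n}) :
  (1 <= q <= n)%N -> (1 <= L)%N -> (forall j, #|B j| <= L)%N ->
  let C : rat := ('C(n.-1, q.-1))%:R in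
  let M : rat := (k * q + r * L)%:R in
  [/\
   (* (1) *)
   forall x : 'I_n,
     (#|[set K : {ffun 'I_k -> {set 'I_n}} |
          [forall i, #|K i| == q]
          && (x \in (\bigcup_i K i) :|: (\bigcup_j B j))
          && iconnected K B]|%:R : rat)
     <= C ^+ k * M ^ ((k + r)%:Z - 1),
   (* (2) *)
   forall (hk : (0 < k)%N) (K1 : {set 'I_n}), #|K1| = q ->
     (#|[set K : {ffun 'I_k -> {set 'I_n}} |
          [forall i, #|K i| == q]
          && (K (Ordinal hk) == K1)
          && iconnected K B]|%:R : rat)
     <= q%:R * C ^+ (k - 1) * M ^ ((k + r)%:Z - 2),
   (* (3) *)
   forall (hk : (1 < k)%N) (e : 'I_k) (K1 : {set 'I_n}),
     (0 < e)%N -> #|K1| = q ->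
     let cnt : rat :=
       (#|[set K : {ffun 'I_k -> {set 'I_n}} |
          [forall i, #|K i| == q]
          && (K (Ordinal (ltnW hk)) == K1) && (K e == K1)
          && iconnected K B]|%:R) in
     ((k + r = 2)%N -> cnt = 1) /\
     ((2 < k + r)%N -> cnt <= q%:R * C ^+ (k - 2) * M ^ ((k + r)%:Z - 3))
   &
   (* (4) *)
   forall (hk : (0 < k)%N) (f : 'I_r), #|B f| = q ->
     let cnt : rat :=
       (#|[set K : {ffun 'I_k -> {set 'I_n}} |
          [forall i, #|K i| == q]
          && (K (Ordinal hk) == B f)
          && iconnected K B]|%:R) in
     ((k + r = 2)%N -> cnt = 1) /\
     ((2 < k + r)%N -> cnt <= q%:R * C ^+ (k - 1) * M ^ ((k + r)%:Z - 3))
  ].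
Proof.
move=> /andP[q_gt0 _] L_gt0 BL C M; rewrite {}/C {}/M.
have W_gt0 : (0 < k)%N -> (0 < k * q + r * L)%N.
  by move=> k_gt0; rewrite addn_gt0 muln_gt0 k_gt0 q_gt0.
split.
- move=> x; rewrite -natrX; apply: ler_natr_exprz.
    exact: through_point_gt0 q_gt0 L_gt0 _.
  exact: card_through_point.
- move=> k_gt0 K1 cardK1; rewrite -natrX -natrM.
  by apply: ler_natr_exprz => [_|]; [exact: W_gt0 | exact: card_rooted_at].
- move=> k_gt1 e K1 e_gt0 cardK1.
  have i0e : Ordinal (ltnW k_gt1) != e by rewrite -val_eqE /= eq_sym -lt0n.
  split=> [m_eq2|m_gt2]; first by rewrite (card_rooted_twice_eq1 q_gt0 L_gt0 BL).
  rewrite -natrX -natrM; apply: ler_natr_exprz => [_|]; first exact: W_gt0 (ltnW k_gt1).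
  exact: card_rooted_twice.
- move=> k_gt0 f cardBf.
  split=> [m_eq2|m_gt2]; first by rewrite (card_rooted_at_block_eq1 q_gt0 L_gt0 BL).
  rewrite -natrX -natrM; apply: ler_natr_exprz => [_|]; first exact: W_gt0.
  exact: card_rooted_at_block.
Qed.
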